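(* Let $K_\infty$ be the monoid given by the monoid presentation $\langle e,b\mid e^2=e,\ b^2=1\rangle$. For every $n\ge1$, the Zimin word $Z_n$ is an isoterm relative to $K_\infty$. That is, if $w$ is a word such that $K_\infty$ satisfies the identity $Z_n\approx w$, then $w=Z_n$ as words.
   Context: Let $x_1,x_2,\dots$ be letters. The Zimin words are defined inductively by $Z_1=x_1$ and $Z_{n+1}=Z_n\,x_{n+1}\,Z_n$. A word $v$ is an isoterm relative to a semigroup $S$ if the only word $v'$ such that $S$ satisfies the identity $v\approx v'$ is $v'=v$ itself. *)

From mathcomp Require Import all_boot.
Set Implicit Arguments. Unset Strict Implicit. Unset Printing Implicit Defensive.

Inductive Kgen : Type := Ke | Kb.

Inductive Kcong : seq Kgen -> seq Kgen -> Prop :=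
  | Kcong_refl u : Kcong u u
  | Kcong_sym u v : Kcong u v -> Kcong v u
  | Kcong_trans u v w : Kcong u v -> Kcong v w -> Kcong u w
  | Kcong_ee p q : Kcong (p ++ [:: Ke; Ke] ++ q) (p ++ [:: Ke] ++ q)
  | Kcong_bb p q : Kcong (p ++ [:: Kb; Kb] ++ q) (p ++ q).

Definition word := seq nat.

(* Zimin words: zimin 1 = x_1, zimin (n+1) = zimin n x_(n+1) zimin n
   (zimin 0 is the empty word, used only to start the recursion). *)
Fixpoint zimin (n : nat) : word :=
  match n with
  | 0 => [::]
  | n'.+1 => zimin n' ++ [:: n'.+1] ++ zimin n'
  end.

(* Image of a word under a substitution of the variables by elements of
   K_infinity (represented by words over the generators). *)
Definition Ksubst (s : nat -> seq Kgen) (w : word) : seq Kgen :=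
  flatten (map s w).

Definition Ksatisfies (u v : word) : Prop :=
  forall s : nat -> seq Kgen, Kcong (Ksubst s u) (Ksubst s v).

Definition Kisoterm (v : word) : Prop :=
  forall v' : word, Ksatisfies v v' -> v' = v.

From mathcomp Require Import all_boot zify.
Set Implicit Arguments. Unset Strict Implicit. Unset Printing Implicit Defensive.

(* Every element of K_infinity has a unique reduced form: a word in e, b with
   no factor ee or bb, computed by a stack.  Substituting eb for every variable
   shows that an identity Z_n ~ w forces |w| = |Z_n|.  Deleting x_1 and
   renumbering the other variables maps Z_(n+1) to Z_n, so by induction w with
   x_1 deleted is Z_n.  Substituting e for x_1 and b for the other variables
   maps Z_(n+1) to the reduced word (eb)^k e; the image of w has the same
   length and the same reduced form, so it is that very word, which locates
   the occurrences of x_1 in w. *)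

Definition kneq (x y : Kgen) : bool :=
  match x, y with Ke, Kb | Kb, Ke => true | _, _ => false end.

Definition reduced (t : seq Kgen) : bool := sorted kneq t.

(* Stacks hold reduced words reversed: the head is the last letter. *)
Definition kpush (st : seq Kgen) (x : Kgen) : seq Kgen :=
  match x, st with
  | Ke, Ke :: _ => st
  | Kb, Kb :: st' => st'
  | _, _ => x :: st
  end.

Definition kstack (t : seq Kgen) : seq Kgen := foldl kpush [::] t.

Lemma reduced_kpush st x : reduced st -> reduced (kpush st x).
Proof. by case: x; case: st => [|[] [|[] st]] //= /andP[]. Qed.

Lemma reduced_foldl_kpush st t : reduced st -> reduced (foldl kpush st t).
Proof. by elim: t st => [|x t IHt] st //= /(reduced_kpush x)/IHt. Qed.

Lemma kpush_ee st : kpush (kpush st Ke) Ke = kpush st Ke.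
Proof. by case: st => [|[] st]. Qed.

Lemma kpush_bb st : reduced st -> kpush (kpush st Kb) Kb = st.
Proof. by case: st => [|[] [|[] st]]. Qed.

Lemma Kcong_kstack u v : Kcong u v -> kstack u = kstack v.
Proof.
rewrite /kstack; elim=> // [u1 v1 w1 _ -> _ -> // | p q | p q].
  by rewrite !foldl_cat /= -/(kpush _ Ke) kpush_ee.
rewrite !foldl_cat /= -/(kpush _ Kb) kpush_bb //.
exact: reduced_foldl_kpush.
Qed.

Lemma foldl_kpush_path x st t :
  path kneq x t -> foldl kpush (x :: st) t = catrev t (x :: st).
Proof.
elim: t x st => [|y t IHt] x st //= /andP[xy red_t].
have -> : kpush (x :: st) y = y :: x :: st by case: x y xy {red_t} => [] [].
exact: IHt.
Qed.

Lemma kstack_reduced t : reduced t -> kstack t = rev t.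
Proof.
case: t => [|x t] // red_t; rewrite /kstack /=.
have -> : kpush [::] x = [:: x] by case: x {red_t}.
exact: foldl_kpush_path.
Qed.

Lemma size_kpush st x : size (kpush st x) <= (size st).+1.
Proof. by case: x; case: st => [|[] st] //=; lia. Qed.

Lemma kpush_full st x : size (kpush st x) = (size st).+1 -> kpush st x = x :: st.
Proof. by case: x; case: st => [|[] st] //=; lia. Qed.

Lemma size_foldl_kpush st t : size (foldl kpush st t) <= size st + size t.
Proof.
elim: t st => [|x t IHt] st /=; first by rewrite addn0.
by have := size_kpush st x; have := IHt (kpush st x); lia.
Qed.

Lemma foldl_kpush_full st t :
  size (foldl kpush st t) = size st + size t -> foldl kpush st t = catrev t st.
Proof.
elim: t st => [|x t IHt] st //= full.
have := size_kpush st x; have := size_foldl_kpush (kpush st x) t => le1 le2.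
by rewrite IHt -?(kpush_full (x := x)) //; lia.
Qed.

(* No reduction can fire on v: it would make v shorter than its reduced form u. *)
Lemma Kcong_reduced_eq u v :
  reduced u -> Kcong u v -> size v = size u -> v = u.
Proof.
move=> red_u /Kcong_kstack; rewrite kstack_reduced // => nf_uv size_vu.
have : kstack v = rev v.
  by apply: foldl_kpush_full; rewrite -/(kstack v) -nf_uv size_rev size_vu.
by rewrite -nf_uv => /(congr1 rev); rewrite !revK.
Qed.

Fixpoint eb_pow (k : nat) : seq Kgen :=
  if k is k'.+1 then Ke :: Kb :: eb_pow k' else [::].

Lemma reduced_eb_pow k : reduced (eb_pow k) /\ reduced (rcons (eb_pow k) Ke).
Proof. by elim: k => [|[|k] IHk] //=; case: IHk => /= -> ->. Qed.

Lemma Ksatisfies_size u v : Ksatisfies u v -> size u = size v.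
Proof.
move=> /(_ (fun=> [:: Ke; Kb])) /Kcong_kstack.
have Ksubst_eb w : Ksubst (fun=> [:: Ke; Kb]) w = eb_pow (size w).
  by elim: w => //= x w <-.
have size_eb_pow k : size (eb_pow k) = k.*2 by elim: k => //= k ->.
rewrite !Ksubst_eb !kstack_reduced; try exact: (reduced_eb_pow _).1.
by move/(congr1 size); rewrite !size_rev !size_eb_pow => /double_inj.
Qed.

Definition wsubst (sigma : nat -> word) (w : word) : word := flatten (map sigma w).

Lemma wsubst_cat sigma u v : wsubst sigma (u ++ v) = wsubst sigma u ++ wsubst sigma v.
Proof. by rewrite /wsubst map_cat flatten_cat. Qed.

Lemma Ksubst_wsubst s sigma w :
  Ksubst s (wsubst sigma w) = Ksubst (fun x => Ksubst s (sigma x)) w.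
Proof.
elim: w => //= x w IHw.
by rewrite /Ksubst /wsubst /= map_cat flatten_cat; congr (_ ++ _).
Qed.

Lemma Ksatisfies_wsubst sigma u v :
  Ksatisfies u v -> Ksatisfies (wsubst sigma u) (wsubst sigma v).
Proof. by move=> uv s; rewrite !Ksubst_wsubst. Qed.

Lemma Ksubst_letters (f : nat -> Kgen) w : Ksubst (fun x => [:: f x]) w = map f w.
Proof. by elim: w => //= x w <-. Qed.

(* Deletes x_1 and renames x_(i+1) to x_i; x_0 is kept. *)
Definition drop_x1 (x : nat) : word := if x == 1 then [::] else [:: x.-1].

Definition mark_x1 (x : nat) : Kgen := if x == 1 then Ke else Kb.

Lemma ziminS n : zimin n.+1 = zimin n ++ [:: n.+1] ++ zimin n.
Proof. by []. Qed.

Lemma wsubst_drop_x1_zimin n : wsubst drop_x1 (zimin n.+1) = zimin n.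
Proof.
elim: n => // n IHn.
by rewrite ziminS (wsubst_cat _ (zimin n.+1)) (wsubst_cat _ [:: n.+2]) IHn.
Qed.

Lemma map_mark_x1_zimin n : exists k, map mark_x1 (zimin n.+1) = rcons (eb_pow k) Ke.
Proof.
elim: n => [|n [k IHk]]; first by exists 0.
exists (k + k).+1; rewrite ziminS (map_cat _ (zimin n.+1)) (map_cat _ [:: n.+2]) IHk /=.
suff cat_eb_pow a c :
    rcons (eb_pow a) Ke ++ Kb :: rcons (eb_pow c) Ke = rcons (eb_pow (a + c).+1) Ke.
  exact: cat_eb_pow.
by elim: a => //= a ->.
Qed.

(* x.-1 is injective off x = 1, so drop_x1 loses only the positions of x_1. *)
Lemma eq_by_mark_x1_drop_x1 u v :
  map mark_x1 u = map mark_x1 v -> wsubst drop_x1 u = wsubst drop_x1 v -> u = v.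
Proof.
elim: u v => [|x u IHu] [|y v] //= [] /[swap] /IHu {}IHu.
rewrite /mark_x1 /wsubst /= /drop_x1.
case: (eqVneq x 1) => [->|x1]; case: (eqVneq y 1) => [->|y1] //= _.
  by move/IHu ->.
by case=> xy /IHu ->; congr (_ :: _); lia.
Qed.

Lemma Ksatisfies_zimin_mark_x1 n w :
  Ksatisfies (zimin n.+1) w -> map mark_x1 w = map mark_x1 (zimin n.+1).
Proof.
move=> zw; have [k mark_zimin] := map_mark_x1_zimin n.
apply: Kcong_reduced_eq; last by rewrite !size_map (Ksatisfies_size zw).
  by rewrite mark_zimin; case: (reduced_eb_pow k).
by have := zw (fun x => [:: mark_x1 x]); rewrite !Ksubst_letters.
Qed.

Lemma Ksatisfies_zimin_drop_x1 n w :
  Ksatisfies (zimin n.+1) w -> Ksatisfies (zimin n) (wsubst drop_x1 w).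
Proof. by move/(Ksatisfies_wsubst drop_x1); rewrite wsubst_drop_x1_zimin. Qed.

Theorem mainTheorem4 (n : nat) : 1 <= n -> Kisoterm (zimin n).
Proof.
move=> _; elim: n => [|n IHn] w zw.
  by case: w zw => // x w /Ksatisfies_size.
apply: eq_by_mark_x1_drop_x1; first exact: Ksatisfies_zimin_mark_x1.
by rewrite wsubst_drop_x1_zimin; apply/IHn/Ksatisfies_zimin_drop_x1.
Qed.
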